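(* Let $L=\{<,\ldots\}$ be a countable first order language containing a binary relation symbol $<$, and let $T$ be a complete $L$-theory with Skolem functions in which $<$ is interpreted as a linear order. Suppose $T$ satisfies the inaccessibility scheme. Let $M\models T$, let $\psi(\bar{x},\bar{t})$ be an $L$-formula and $\bar{b}\in M$ with $|\bar{b}|=|\bar{t}|$ such that $\psi(\bar{x},\bar{b})$ is $\bar{x}$-unbounded in $M$. Let $\varphi(\bar{x},\bar{t}')$ be an $L$-formula and $a\in M$. Then there is a tuple $\bar{c}\in M$ with $|\bar{c}|=|\bar{x}|$ such that $E_{\varphi}(\bar{x},\bar{c};a)\wedge\psi(\bar{x},\bar{b})$ is $\bar{x}$-unbounded in $M$.
   Context: For a formula $\varphi(\bar{x},\bar{t})$ and tuples $\bar{y}_0,\bar{y}_1$ of the same length as $\bar{x}$, write $E_{\varphi}(\bar{y}_0,\bar{y}_1;z_0)$ for the formula $(\forall \bar{t}<z_0)(\varphi(\bar{y}_0,\bar{t})\leftrightarrow\varphi(\bar{y}_1,\bar{t}))$; here $\bar{t}<z_0$ means every coordinate of $\bar{t}$ is $<z_0$. $T$ satisfies the inaccessibility scheme if for every formula $\varphi(\bar{x},\bar{t})$ of $L$ (with $\bar{x}$ a tuple of any finite length), $T\models (\forall z_0)(\exists z_1>z_0)(\forall\bar{y}_0)(\exists\bar{y}_1<z_1)E_{\varphi}(\bar{y}_0,\bar{y}_1;z_0)$. ''$T$ has Skolem functions'' means that for every formula $\theta(y,\bar{x})$ there is a term $\tau(\bar{x})$ of $L$ with $T\models \forall\bar{x}(\exists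 y\,\theta(y,\bar{x})\to\theta(\tau(\bar{x}),\bar{x}))$. For $\bar{x}=(x_1,\ldots,x_n)$ and a formula $\chi(\bar{x})$ with parameters from $M$, $\chi(\bar{x})$ is $\bar{x}$-unbounded in $M$ if $M\models(\forall\alpha_1)(\exists x_1>\alpha_1)(\forall\alpha_2)(\exists x_2>\alpha_2)\cdots(\forall\alpha_n)(\exists x_n>\alpha_n)\chi(\bar{x})$; otherwise it is $\bar{x}$-bounded. *)

From Stdlib Require Lists.List.
From mathcomp Require Import all_boot.
Set Implicit Arguments. Unset Strict Implicit. Unset Printing Implicit Defensive.

Record language := Language {
  funs : countType;            (* function symbols (constants have arity 0) *)
  rels : countType;
  fun_ar : funs -> nat;
  rel_ar : rels -> nat;
  ltR : rels;
  ltR_ar : rel_ar ltR = 2 }.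

Section FOL.
Variable L : language.

Inductive term : Type :=
| Var : nat -> term
| App : forall f : funs L, ('I_(fun_ar f) -> term) -> term.

(* Formulas; quantifiers bind a named variable. *)
Inductive formula : Type :=
| Fal : formula
| Eq : term -> term -> formula
| Rel : forall r : rels L, ('I_(rel_ar r) -> term) -> formula
| Not : formula -> formula
| And : formula -> formula -> formula
| Or : formula -> formula -> formula
| Imp : formula -> formula -> formula
| All : nat -> formula -> formula
| Ex : nat -> formula -> formula.

Fixpoint occurs (v : nat) (t : term) : Prop :=
  match t with
  | Var w => w = v
  | App f args => exists i, occurs v (args i)
  end.

Fixpoint free (v : nat) (p : formula) : Prop :=
  match p with
  | Fal => False
  | Eq t1 t2 => occurs v t1 \/ occurs v t2
  | Rel r args => exists i, occurs v (args i)
  | Not q => free v q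
  | And q1 q2 | Or q1 q2 | Imp q1 q2 => free v q1 \/ free v q2
  | All w q | Ex w q => v <> w /\ free v q
  end.

Definition sentence (p : formula) : Prop := forall v, ~ free v p.

Definition fv_below (p : formula) (m : nat) : Prop := forall v, free v p -> v < m.

Record structure := Structure {
  carrier :> Type;
  inhab : carrier;
  fint : forall f : funs L, ('I_(fun_ar f) -> carrier) -> carrier;
  rint : forall r : rels L, ('I_(rel_ar r) -> carrier) -> Prop }.

Section Semantics.
Variable M : structure.

Fixpoint eval (e : nat -> M) (t : term) : M :=
  match t with
  | Var v => e v
  | App f args => fint (fun i => eval e (args i))
  end.

Definition upd (e : nat -> M) (v : nat) (m : M) : nat -> M :=
  fun w => if w == v then m else e w.

Fixpoint sat (e : nat -> M) (p : formula) : Prop :=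
  match p with
  | Fal => False
  | Eq t1 t2 => eval e t1 = eval e t2
  | Rel r args => rint (fun i => eval e (args i))
  | Not q => ~ sat e q
  | And q1 q2 => sat e q1 /\ sat e q2
  | Or q1 q2 => sat e q1 \/ sat e q2
  | Imp q1 q2 => sat e q1 -> sat e q2
  | All v q => forall m, sat (upd e v m) q
  | Ex v q => exists m, sat (upd e v m) q
  end.

Definition ltM (x y : M) : Prop :=
  rint (fun i : 'I_(rel_ar (ltR L)) => if val i == 0 then x else y).

Definition env_of (s : seq M) : nat -> M := fun i => nth (inhab M) s i.

(* E_phi(y0, y1; z0) for phi(x, t) with |x| = |y0| = |y1| and |t| = k:
   variables 0..|x|-1 of phi are x, the next k are t. *)
Definition E_phi (phi : formula) (k : nat) (y0 y1 : seq M) (z0 : M) : Prop :=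
  forall ts : seq M, size ts = k -> Stdlib.Lists.List.Forall (fun t => ltM t z0) ts ->
    (sat (env_of (y0 ++ ts)) phi <-> sat (env_of (y1 ++ ts)) phi).

(* chi(x1..xn) (given as a predicate on n-element lists) is x-unbounded:
   forall a1, exists x1 > a1, forall a2, exists x2 > a2, ..., chi(x1,...,xn) *)
Fixpoint unbounded (n : nat) (chi : seq M -> Prop) : Prop :=
  match n with
  | 0 => chi [::]
  | n'.+1 => forall alpha : M, exists x : M, ltM alpha x /\
               unbounded n' (fun s => chi (x :: s))
  end.

End Semantics.

Definition theory := formula -> Prop.

Definition models (M : structure) (T : theory) : Prop :=
  forall p, T p -> forall e : nat -> M, sat e p.

Definition entails (T : theory) (p : formula) : Prop :=
  forall M : structure, models M T -> forall e : nat -> M, sat e p.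

Definition theory_of_sentences (T : theory) : Prop := forall p, T p -> sentence p.

Definition complete (T : theory) : Prop :=
  (exists M : structure, models M T) /\
  forall p, sentence p -> entails T p \/ entails T (Not p).

Definition has_skolem (T : theory) : Prop :=
  forall (theta : formula) (y : nat), exists tau : term, ~ occurs y tau /\
    forall M : structure, models M T -> forall e : nat -> M,
      (exists m, sat (upd e y m) theta) -> sat (upd e y (eval e tau)) theta.

Definition lin_order_theory (T : theory) : Prop :=
  forall M : structure, models M T ->
    (forall x : M, ~ ltM x x) /\
    (forall x y z : M, ltM x y -> ltM y z -> ltM x z) /\
    (forall x y : M, ltM x y \/ x = y \/ ltM y x).

Definition inaccessibility (T : theory) : Prop :=
  forall (n k : nat) (phi : formula), fv_below phi (n + k) ->
    forall M : structure, models M T ->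
      forall z0 : M, exists z1 : M, ltM z0 z1 /\
        forall y0 : seq M, size y0 = n ->
          exists y1 : seq M, size y1 = n /\ Stdlib.Lists.List.Forall (fun y => ltM y z1) y1 /\
            E_phi phi k y0 y1 z0.

End FOL.

From mathcomp Require Import all_boot zify.
From Stdlib Require Import FunctionalExtensionality Classical.
Set Implicit Arguments. Unset Strict Implicit. Unset Printing Implicit Defensive.

(* We build the witness c coordinate by coordinate, keeping it below the bound z1 given by the
   inaccessibility scheme for phi at a. Suppose the prefix p of x cannot be extended by one more
   unbounded coordinate for any c below z1. Take z0 above z1, a, b and p. The set of y above which
   some x starts an unbounded (E_phi /\ psi)-continuation of p is definable from parameters
   below z0, so inaccessibility gives z2 such that every y has a representative below z2 for
   this set, uniformly in the parameters. Choose x1 > z2 continuing psi unboundedly; by induction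
   some c0 below z1 works for p ++ [x1]. As c0 fails for p, some y0 has no good x, while its
   representative below z2 < x1 has x1: a contradiction. *)

Section Coincidence.
Variables (L : language) (M : structure L).

Lemma eq_in_eval (t : term L) (e1 e2 : nat -> M) :
  (forall v, occurs v t -> e1 v = e2 v) -> eval e1 t = eval e2 t.
Proof.
elim: t => [v|f args IH] He /=; first exact: He.
congr fint; apply: functional_extensionality => i.
by apply: IH => v Hv; apply: He; exists i.
Qed.

Lemma eq_in_sat (q : formula L) (e1 e2 : nat -> M) :
  (forall v, free v q -> e1 v = e2 v) -> (sat e1 q <-> sat e2 q).
Proof.
elim: q e1 e2 => [|t1 t2|r args|q IH|q1 IH1 q2 IH2|q1 IH1 q2 IH2|q1 IH1 q2 IH2|w q IH|w q IH]
  e1 e2 He /=.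
- by [].
- by rewrite (@eq_in_eval t1 e1 e2) ?(@eq_in_eval t2 e1 e2) // => v Hv; apply: He; [right|left].
- have -> // : (fun i => eval e1 (args i)) = (fun i => eval e2 (args i)).
  apply: functional_extensionality => i; apply: eq_in_eval => v Hv; apply: He; by exists i.
- by rewrite (IH e1 e2 He).
- by rewrite (IH1 e1 e2) ?(IH2 e1 e2) // => v Hv; apply: He; [right|left].
- by rewrite (IH1 e1 e2) ?(IH2 e1 e2) // => v Hv; apply: He; [right|left].
- by rewrite (IH1 e1 e2) ?(IH2 e1 e2) // => v Hv; apply: He; [right|left].
all: have Hupd m : sat (upd e1 w m) q <-> sat (upd e2 w m) q
  by apply: IH => v Hv; rewrite /upd; case: eqP => // /eqP Hvw; apply: He; split=> //; exact/eqP.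
- by split=> H m; apply/Hupd.
- by split=> -[m Hm]; exists m; apply/Hupd.
Qed.

End Coincidence.

Lemma exists_uniform_bound n (P : 'I_n -> nat -> Prop) :
  (forall o m m', m <= m' -> P o m -> P o m') -> (forall o, exists m, P o m) ->
  exists m, forall o, P o m.
Proof.
move=> Pmono HP.
suff [m Hm] : exists m, forall o, o \in enum 'I_n -> P o m.
  by exists m => o; apply: Hm; rewrite mem_enum.
elim: (enum 'I_n) => [|o s [m Hm]]; first by exists 0.
have [m' Hm'] := HP o; exists (maxn m m') => o'; rewrite inE => /orP[/eqP->|Ho'].
- by apply: Pmono Hm'; rewrite leq_maxr.
- by apply: Pmono (Hm _ Ho'); rewrite leq_maxl.
Qed.

Lemma exists_occurs_below (L : language) (t : term L) :
  exists m, forall v, occurs v t -> v < m.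
Proof.
elim: t => [v|f args IH]; first by exists v.+1 => w /= ->.
have [m Hm] := exists_uniform_bound (P := fun o m => forall v, occurs v (args o) -> v < m)
  (fun o m m' Hle H v Hv => leq_trans (H v Hv) Hle) IH.
by exists m => v /= [i Hi]; exact: Hm Hi.
Qed.

Lemma exists_fv_below (L : language) (q : formula L) : exists m, fv_below q m.
Proof.
rewrite /fv_below.
elim: q => [|t1 t2|r args|q IH|q1 [m1 H1] q2 [m2 H2]|q1 [m1 H1] q2 [m2 H2]
           |q1 [m1 H1] q2 [m2 H2]|w q [m H]|w q [m H]].
- by exists 0.
- have [m1 H1] := exists_occurs_below t1; have [m2 H2] := exists_occurs_below t2.
  exists (maxn m1 m2) => v /= [/H1|/H2]; lia.
- have [m Hm] := exists_uniform_bound (P := fun o m => forall v, occurs v (args o) -> v < m)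
    (fun o m m' Hle H v Hv => leq_trans (H v Hv) Hle) (fun o => exists_occurs_below (args o)).
  by exists m => v /= [i Hi]; exact: Hm Hi.
- exact: IH.
1-3: by exists (maxn m1 m2) => v /= [/H1|/H2]; lia.
all: by exists m => v /= [_ /H].
Qed.

Section Updates.
Variables (L : language) (M : structure L).

Fixpoint updl (e : nat -> M) (vs : seq nat) (ms : seq M) : nat -> M :=
  if (vs, ms) is (v :: vs', m :: ms') then updl (upd e v m) vs' ms' else e.

Lemma updl_notin vs ms (e : nat -> M) v : v \notin vs -> updl e vs ms v = e v.
Proof.
elim: vs ms e => [|w vs IH] [|m ms] e //=; rewrite inE negb_or => /andP[Hvw Hv].
by rewrite IH // /upd (negbTE Hvw).
Qed.

Lemma map_updl_notin vs ms (e : nat -> M) s :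
  (forall w, w \in s -> w \notin vs) -> map (updl e vs ms) s = map e s.
Proof. by move=> Hs; apply/eq_in_map => w /Hs; apply: updl_notin. Qed.

Lemma map_updl vs ms (e : nat -> M) :
  uniq vs -> size ms = size vs -> map (updl e vs ms) vs = ms.
Proof.
elim: vs ms e => [|w vs IH] [|m ms] e //= /andP[Hw Hu] [Hs].
by rewrite IH // updl_notin // /upd eqxx.
Qed.

Lemma map_updl_iota lo m ms (e : nat -> M) o len : size ms = m -> o + len <= m ->
  map (updl e (iota lo m) ms) (iota (lo + o) len) = take len (drop o ms).
Proof.
move=> <- Hlen; have Hiota : iota (lo + o) len = take len (drop o (iota lo (size ms))).
  rewrite -{1}(subnKC Hlen) -addnA iotaD drop_size_cat ?size_iota //.
  by rewrite iotaD take_size_cat ?size_iota.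
by rewrite Hiota map_take map_drop map_updl ?iota_uniq ?size_iota.
Qed.

Lemma updl_eq_off vs ms (e1 e2 : nat -> M) A :
  (forall w, w != A -> e1 w = e2 w) -> forall w, w != A -> updl e1 vs ms w = updl e2 vs ms w.
Proof.
elim: vs ms e1 e2 => [|v vs IH] [|m ms] e1 e2 He //=.
by apply: IH => w Hw; rewrite /upd; case: eqP => // _; apply: He.
Qed.

End Updates.

Section Combinators.
Variables (L : language) (M : structure L).

(* [substv lo s q] renames variable [lo + i] of [q] into [s_i], written as
   [forall v_lo, v_lo = v_(s_0) -> ...] to avoid capture-avoiding substitution. *)
Fixpoint substv (lo : nat) (s : seq nat) (q : formula L) : formula L :=
  if s is w :: s' then All lo (Imp (Eq (Var L lo) (Var L w)) (substv lo.+1 s' q)) else q.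

Lemma sat_substv lo s q (e : nat -> M) :
  (forall w, w \in s -> (w < lo) || (lo + size s <= w)) ->
  sat e (substv lo s q) <-> sat (updl e (iota lo (size s)) (map e s)) q.
Proof.
elim: s lo e => [|w s IH] lo e Hs //=.
have Hwlo : w != lo by move: (Hs w (mem_head _ _)) => /=; lia.
have Hs' w' : w' \in s -> (w' < lo) || (lo + (size s).+1 <= w').
  by move=> Hw'; apply: Hs; rewrite inE Hw' orbT.
have Hlo : lo \notin s by apply/negP => /Hs'; lia.
have {}IH : sat (upd e lo (e w)) (substv lo.+1 s q) <->
            sat (updl (upd e lo (e w)) (iota lo.+1 (size s)) (map e s)) q.
  rewrite IH; last by move=> w' /Hs'; lia.
  have -> // : map (upd e lo (e w)) s = map e s.
  by apply/eq_in_map => w' Hw'; rewrite /upd ifF //; apply: contraNF Hlo => /eqP <-.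
by rewrite -IH /upd eqxx (negbTE Hwlo); split=> [/(_ (e w) erefl) | H m ->].
Qed.

Lemma sat_substv0 s q (e : nat -> M) :
  fv_below q (size s) -> (forall w, w \in s -> size s <= w) ->
  sat e (substv 0 s q) <-> sat (env_of (map e s)) q.
Proof.
move=> Hq Hs; rewrite sat_substv => [|w /Hs]; last by rewrite orbC => ->.
apply: eq_in_sat => v /Hq Hv.
have := @map_updl_iota _ _ 0 (size s) (map e s) e v 1 (size_map _ _); rewrite addn1 => /(_ Hv) /=.
by rewrite (drop_nth (inhab M)) ?size_map //= => -[->].
Qed.

Lemma sat_substv_blocks X Y n m q (e : nat -> M) :
  fv_below q (n + m) -> n + m <= X -> n + m <= Y ->
  sat e (substv 0 (iota X n ++ iota Y m) q) <->
  sat (env_of (map e (iota X n) ++ map e (iota Y m))) q.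
Proof.
move=> Hq HX HY; rewrite -map_cat sat_substv0 ?size_cat ?size_iota //.
by move=> w; rewrite mem_cat !mem_iota; lia.
Qed.

Definition LtF (u v : nat) : formula L :=
  locked (Rel (fun i : 'I_(rel_ar (ltR L)) => if val i == 0 then Var L u else Var L v)).

Lemma sat_LtF (e : nat -> M) u v : sat e (LtF u v) <-> ltM (e u) (e v).
Proof.
rewrite /LtF -lock /= /ltM; have -> // : (fun i : 'I_(rel_ar (ltR L)) =>
  eval e (if val i == 0 then Var L u else Var L v)) = (fun i => if val i == 0 then e u else e v).
by apply: functional_extensionality => i; case: ifP.
Qed.

Lemma sat_And (e : nat -> M) q1 q2 : sat e (And q1 q2) <-> sat e q1 /\ sat e q2.
Proof. by []. Qed.

Definition IffF (q1 q2 : formula L) : formula L := And (Imp q1 q2) (Imp q2 q1).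

Lemma sat_IffF (e : nat -> M) q1 q2 : sat e (IffF q1 q2) <-> (sat e q1 <-> sat e q2).
Proof. by []. Qed.

Fixpoint AllBelow (ts : seq nat) (z : nat) (q : formula L) : formula L :=
  if ts is t :: ts' then All t (Imp (LtF t z) (AllBelow ts' z q)) else q.

Lemma sat_AllBelow ts z q (e : nat -> M) : z \notin ts ->
  sat e (AllBelow ts z q) <-> forall ms, size ms = size ts ->
    List.Forall (fun m => ltM m (e z)) ms -> sat (updl e ts ms) q.
Proof.
elim: ts e => [|t ts IH] e /=.
  by move=> _; split=> [H [|//] | /(_ [::] erefl (List.Forall_nil _))].
rewrite inE negb_or => /andP[Hzt Hz].
have Hz' m : upd e t m z = e z by rewrite /upd (negbTE Hzt).
have Ht m : upd e t m t = m by rewrite /upd eqxx.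
split=> [H [|m ms] // [Hs] /List.Forall_cons_iff[Hm Hms] | H m].
- move: (H m); rewrite /= sat_LtF Ht Hz' => /(_ Hm).
  by rewrite IH // Hz'; apply.
- rewrite /= sat_LtF Ht Hz' => Hm; rewrite IH // Hz' => ms Hs Hms.
  by apply: (H (m :: ms)); [rewrite /= Hs | constructor].
Qed.

Fixpoint UnboundedF (z : nat) (vs : seq nat) (q : formula L) : formula L :=
  if vs is v :: vs' then All z (Ex v (And (LtF z v) (UnboundedF z vs' q))) else q.

Lemma sub_unbounded j (P Q : seq M -> Prop) :
  (forall s, size s = j -> P s -> Q s) -> unbounded j P -> unbounded j Q.
Proof.
elim: j P Q => [|j IH] P Q HPQ /=; first exact: HPQ.
move=> HP alpha; have [x [Hx Hu]] := HP alpha; exists x; split=> //.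
by apply: IH Hu => s Hs; apply: HPQ; rewrite /= Hs.
Qed.

Lemma eq_unbounded j (P Q : seq M -> Prop) :
  (forall s, size s = j -> (P s <-> Q s)) -> (unbounded j P <-> unbounded j Q).
Proof. by move=> HPQ; split; apply: sub_unbounded => s /HPQ ->. Qed.

Lemma sat_UnboundedF z vs q (e : nat -> M) : z \notin vs ->
  (forall e1 e2 : nat -> M, (forall w, w != z -> e1 w = e2 w) -> (sat e1 q <-> sat e2 q)) ->
  sat e (UnboundedF z vs q) <-> unbounded (size vs) (fun s => sat (updl e vs s) q).
Proof.
elim: vs e => [//|v vs IH] e; rewrite inE negb_or => /andP[Hzv Hz] Hq /=.
have Hzz al x : upd (upd e z al) v x z = al by rewrite /upd (negbTE Hzv) eqxx.
have Hvv al x : upd (upd e z al) v x v = x by rewrite /upd eqxx.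
have Hoff al x : unbounded (size vs) (fun s => sat (updl (upd (upd e z al) v x) vs s) q) <->
                 unbounded (size vs) (fun s => sat (updl (upd e v x) vs s) q).
  apply: eq_unbounded => s _; apply: Hq; apply: updl_eq_off => w Hw.
  by rewrite /upd; case: eqP => // _; rewrite (negbTE Hw).
split=> H al; have := H al.
- by case=> x /=; rewrite sat_LtF Hzz Hvv IH // Hoff => -[Hx Hu]; exists x.
- by case=> x [Hx Hu]; exists x => /=; rewrite sat_LtF Hzz Hvv IH // Hoff.
Qed.

End Combinators.

Section ExtensionFormula.
Variables (L : language) (M : structure L) (phi psi : formula L) (n k k' : nat).
Hypotheses (Hphi : fv_below phi (n + k')) (Hpsi : fv_below psi (n + k)).

Definition EphiF (X C A T : nat) : formula L :=
  AllBelow (iota T k') A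
    (IffF (substv 0 (iota X n ++ iota T k') phi) (substv 0 (iota C n ++ iota T k') phi)).

Lemma sat_EphiF X C A T (e : nat -> M) :
  n + k' <= X -> n + k' <= C -> X + n <= T -> C + n <= T -> A < T ->
  sat e (EphiF X C A T) <-> E_phi phi k' (map e (iota X n)) (map e (iota C n)) (e A).
Proof.
move=> HX HC HXT HCT HAT; rewrite sat_AllBelow ?mem_iota ?size_iota; last lia.
have Hblock B ts : n + k' <= B -> B + n <= T -> size ts = k' ->
    sat (updl e (iota T k') ts) (substv 0 (iota B n ++ iota T k') phi) <->
    sat (env_of (map e (iota B n) ++ ts)) phi.
  move=> HB HBT Hts; rewrite sat_substv_blocks //; last lia.
  rewrite map_updl_notin ?map_updl ?iota_uniq ?size_iota // => w.
  by rewrite !mem_iota; lia.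
split=> H ts Hts Hlt; first by rewrite -!Hblock // -sat_IffF; exact: H.
by rewrite sat_IffF !Hblock //; exact: H.
Qed.

Definition extendable j (p c : seq M) (a : M) (b : seq M) (y : M) : Prop :=
  exists x, ltM y x /\ unbounded j (fun s =>
    E_phi phi k' (p ++ x :: s) c a /\ sat (env_of ((p ++ x :: s) ++ b)) psi).

Definition EphiPsiF (X C A B : nat) : formula L :=
  And (EphiF X C A (X + n)) (substv 0 (iota X n ++ iota B k) psi).

Lemma sat_EphiPsiF X C A B (e : nat -> M) :
  n + k + k' <= C -> C + n <= A -> A < B -> B + k <= X ->
  sat e (EphiPsiF X C A B) <->
  E_phi phi k' (map e (iota X n)) (map e (iota C n)) (e A) /\
  sat (env_of (map e (iota X n) ++ map e (iota B k))) psi.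
Proof. by move=> *; rewrite sat_And sat_EphiF ?sat_substv_blocks //; lia. Qed.

Definition ExtF (N C A B X plen j : nat) : formula L :=
  Ex (X + plen) (And (LtF L N (X + plen))
    (UnboundedF (X + n + k') (iota (X + plen).+1 j) (EphiPsiF X C A B))).

Lemma sat_ExtF N C A B X plen j (e : nat -> M) :
  N < C -> n + k + k' <= C -> C + n <= A -> A < B -> B + k <= X -> plen + j.+1 = n ->
  sat e (ExtF N C A B X plen j) <->
  extendable j (map e (iota X plen)) (map e (iota C n)) (e A) (map e (iota B k)) (e N).
Proof.
move=> HNC HC HCA HAB HBX Hn; set x := X + plen.
have Hoff (e1 e2 : nat -> M) : (forall w, w != X + n + k' -> e1 w = e2 w) ->
    sat e1 (EphiPsiF X C A B) <-> sat e2 (EphiPsiF X C A B).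
  move=> H12; have Hw w : w < X + n -> e1 w = e2 w by move=> Hw; apply: H12; apply/eqP; lia.
  have Hm blk : (forall w, w \in blk -> w < X + n) -> map e1 blk = map e2 blk.
    by move=> Hblk; apply/eq_in_map => w /Hblk /Hw.
  by rewrite !sat_EphiPsiF // !Hm ?Hw //; try lia; move=> w; rewrite mem_iota; lia.
have Hlow x0 s w : w < x -> updl (upd e x x0) (iota x.+1 j) s w = e w.
  by move=> Hw; rewrite updl_notin ?mem_iota /upd ?ifF //; apply/eqP; lia.
have Hmap x0 s blk : (forall w, w \in blk -> w < x) ->
    map (updl (upd e x x0) (iota x.+1 j) s) blk = map e blk.
  by move=> Hblk; apply/eq_in_map => w /Hblk /Hlow.
have Hxs x0 s : size s = j ->
    map (updl (upd e x x0) (iota x.+1 j) s) (iota X n) = map e (iota X plen) ++ x0 :: s.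
  move=> Hs; rewrite -Hn iotaD map_cat Hmap => [|w]; last by rewrite mem_iota; lia.
  rewrite /= updl_notin ?mem_iota; last lia.
  by rewrite /upd eqxx -/(upd e x x0) map_updl ?iota_uniq ?size_iota.
have HN x0 : upd e x x0 N = e N by rewrite /upd ifF //; apply/eqP; lia.
have Hx x0 : upd e x x0 x = x0 by rewrite /upd eqxx.
have Hpt x0 : sat (upd e x x0)
      (And (LtF L N x) (UnboundedF (X + n + k') (iota x.+1 j) (EphiPsiF X C A B))) <->
    ltM (e N) x0 /\ unbounded j (fun s => E_phi phi k' (map e (iota X plen) ++ x0 :: s)
      (map e (iota C n)) (e A) /\
      sat (env_of ((map e (iota X plen) ++ x0 :: s) ++ map e (iota B k))) psi).
  rewrite sat_And sat_LtF HN Hx sat_UnboundedF ?size_iota ?mem_iota; [|lia|exact: Hoff].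
  apply: and_iff_compat_l; apply: eq_unbounded => s Hs.
  by rewrite sat_EphiPsiF // Hxs ?Hmap ?Hlow //; try lia; move=> w; rewrite mem_iota; lia.
by split=> -[x0 Hx0]; exists x0; apply (Hpt x0).
Qed.

(* The free variables are first copied above every variable used by [phi], [psi] and [ExtF]. *)
Definition ExtensionF plen j : formula L :=
  let P := n + k + plen + 2 in let N := P + n + k + k' in
  substv N (iota 0 P) (ExtF N (N + 1) (N + 1 + n) (N + 2 + n) (N + 2 + n + k) plen j).

Lemma sat_ExtensionF plen j (y a : M) (c b p rest : seq M) :
  plen + j.+1 = n -> size c = n -> size b = k -> size p = plen ->
  sat (env_of (y :: c ++ a :: b ++ p ++ rest)) (ExtensionF plen j) <-> extendable j p c a b y.
Proof.
move=> Hn Hc Hb Hp; set ps := y :: _; rewrite /ExtensionF /=.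
set P := n + k + plen + 2; set N := P + n + k + k'.
have eP : P = n + k + plen + 2 by []; have eN : N = P + n + k + k' by [].
clearbody P N.
have HP : P <= size ps by rewrite /ps /= size_cat /= !size_cat; lia.
rewrite sat_substv ?size_iota => [|w]; last by rewrite mem_iota; lia.
rewrite sat_ExtF; try lia.
set e0 := updl _ _ _.
have Hat o len pre blk post : ps = pre ++ blk ++ post -> size pre = o -> size blk = len ->
    o + len <= P -> map e0 (iota (N + o) len) = blk.
  move=> Hps Hpre Hblk Hol; rewrite map_updl_iota ?size_map ?size_iota //.
  rewrite map_nth_iota0 // take_drop take_takel; last lia.
  by rewrite -take_drop Hps drop_size_cat // take_size_cat.
have Hpt o pre z post : ps = pre ++ z :: post -> size pre = o -> o < P -> e0 (N + o) = z.
  move=> Hps Hpre Hol; move: (Hat o 1 pre [:: z] post Hps Hpre erefl).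
  by rewrite addn1 => /(_ Hol) /= [=].
have -> : e0 N = y by rewrite -[N]addn0; apply: (Hpt 0 [::]) => //; lia.
rewrite -!addnA (Hat 1 n [:: y] c (a :: b ++ p ++ rest)) //; last lia.
rewrite (Hpt (1 + n) (y :: c) a (b ++ p ++ rest)) //; [|by rewrite /= Hc|lia].
rewrite (Hat (2 + n) k (y :: c ++ [:: a]) b (p ++ rest)) //;
  [|by rewrite /ps /= -catA|by rewrite /= size_cat Hc addn1|lia].
rewrite (Hat (2 + (n + k)) plen (y :: c ++ a :: b) p rest) //;
  [by rewrite /ps /= -!catA|by rewrite /= size_cat /= Hc Hb; lia|lia].
Qed.

End ExtensionFormula.

Section Witness.
Variables (L : language) (T : theory L) (M : structure L).
Hypotheses (HM : models M T) (Hinacc : inaccessibility T).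
Hypotheses (lt_trans : forall x y z : M, ltM x y -> ltM y z -> ltM x z)
           (lt_total : forall x y : M, ltM x y \/ x = y \/ ltM y x).

Local Notation below z := (List.Forall (fun u : M => ltM u z)).

Lemma exists_strict_ub : (forall x : M, exists y, ltM x y) -> forall s : seq M, exists z, below z s.
Proof.
move=> Hnomax; elim=> [|u s [z Hz]]; first by exists (inhab M).
have Hup z' : ltM z z' -> below z' s.
  by move=> Hzz'; apply: List.Forall_impl Hz => w /lt_trans; apply.
case: (lt_total u z) => [Huz | [-> | Hzu]].
- by exists z; constructor.
- by have [x Hx] := Hnomax z; exists x; constructor; last exact: Hup.
- by have [x Hx] := Hnomax u; exists x; constructor; last exact/Hup/(lt_trans Hzu).
Qed.

Variables (phi psi : formula L) (n k k' : nat) (a : M) (b : seq M).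
Hypotheses (Hphi : fv_below phi (n + k')) (Hpsi : fv_below psi (n + k)) (Hb : size b = k).

Lemma extendable_transfer p j (z0 : M) : size p + j.+1 = n -> below z0 (a :: b ++ p) ->
  exists z2, forall c, size c = n -> below z0 c ->
    forall x, exists y, ltM y z2 /\
      (extendable phi psi k' j p c a b x <-> extendable phi psi k' j p c a b y).
Proof.
move=> Hn Habp; set Ext := ExtensionF phi psi n k k' (size p) j.
have [m Hm] := exists_fv_below Ext.
set K := maxn (n + k + size p + 1) m.
have HK : fv_below Ext (1 + K) by move=> v /Hm; rewrite /K; lia.
have [z2 [_ Hz2]] := Hinacc HK HM z0.
exists z2 => c Hc Hcz x.
have [y1 [Hy1 [Hlt HE]]] := Hz2 [:: x] erefl.
case: y1 Hy1 Hlt HE => [|y [|//]] //= _ /List.Forall_cons_iff[Hy _] HE.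
exists y; split=> //.
(* [K] must also bound the free variables of [Ext], so the parameters are padded
   with copies of [a]. *)
set rest := nseq (K - (n + k + size p + 1)) a.
have Hrest : below z0 rest.
  by rewrite /rest; elim: (_ - _) => //= i IH; constructor=> //; case/List.Forall_cons_iff: Habp.
have := HE (c ++ a :: b ++ p ++ rest).
rewrite /= !sat_ExtensionF //; apply.
- by rewrite size_cat /= !size_cat size_nseq Hc Hb /K; lia.
- apply/List.Forall_app; split=> //.
  by rewrite catA -cat_cons; apply List.Forall_app.
Qed.

Definition bounded_witness (z : M) p j (c : seq M) : Prop :=
  size c = n /\ below z c /\ unbounded j (fun s =>
    E_phi phi k' (p ++ s) c a /\ sat (env_of ((p ++ s) ++ b)) psi).

Lemma bounded_witness_step z1 p j : size p + j.+1 = n ->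
  unbounded j.+1 (fun s => sat (env_of ((p ++ s) ++ b)) psi) ->
  (forall x, unbounded j (fun s => sat (env_of ((p ++ x :: s) ++ b)) psi) ->
     exists c, bounded_witness z1 (p ++ [:: x]) j c) ->
  exists c, bounded_witness z1 p j.+1 c.
Proof.
move=> Hn Hu IH; apply: NNPP => Hno.
have [z0 /List.Forall_cons_iff[Hz10 Habp]] : exists z0, below z0 (z1 :: a :: b ++ p).
  by apply: exists_strict_ub => x; have [y [Hxy _]] := Hu x; exists y.
have [z2 Hz2] := extendable_transfer Hn Habp.
have [x1 [Hx1 Hu1]] := Hu z2.
have [c0 [Hc0 [Hc0z1 Hc0U]]] := IH x1 Hu1.
have Hc0z0 : below z0 c0 by apply: List.Forall_impl Hc0z1 => u /lt_trans; apply.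
have [x0 Hx0] : exists x0, ~ extendable phi psi k' j p c0 a b x0.
  apply: NNPP => Hall; apply: Hno; exists c0; do 2!split=> //; move=> x.
  by apply: NNPP => Hx; apply: Hall; exists x.
have [y [Hy Hxy]] := Hz2 c0 Hc0 Hc0z0 x0.
apply/Hx0/Hxy; exists x1; split; first exact: lt_trans Hy Hx1.
by apply: sub_unbounded Hc0U => s _; rewrite -catA.
Qed.

Lemma exists_bounded_witness z1 :
  (forall y0, size y0 = n -> exists y1, size y1 = n /\ below z1 y1 /\ E_phi phi k' y0 y1 a) ->
  forall j p, size p + j = n -> unbounded j (fun s => sat (env_of ((p ++ s) ++ b)) psi) ->
  exists c, bounded_witness z1 p j c.
Proof.
move=> Hz1; elim=> [|j IH] p Hn Hu.
  rewrite addn0 in Hn; have [c [Hc [Hcz HE]]] := Hz1 p Hn.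
  by exists c; rewrite /bounded_witness /= !cats0; rewrite /= cats0 in Hu.
apply: bounded_witness_step => // x Hx.
by apply: IH; [rewrite size_cat /=; lia | apply: sub_unbounded Hx => s _; rewrite -(catA p [:: x])].
Qed.

End Witness.

Theorem proposition2p2 (L : language) (T : theory L)
  (HTs : theory_of_sentences T) (HTc : complete T) (HSk : has_skolem T)
  (Hlin : lin_order_theory T) (Hinacc : inaccessibility T)
  (M : structure L) (HM : models M T)
  (n k : nat) (psi : formula L) (Hpsi : fv_below psi (n + k))
  (b : seq M) (Hb : size b = k)
  (Hunb : unbounded n (fun xs => sat (env_of (xs ++ b)) psi))
  (k' : nat) (phi : formula L) (Hphi : fv_below phi (n + k')) (a : M) :
  exists c : seq M, size c = n /\
    unbounded n (fun xs => E_phi phi k' xs c a /\ sat (env_of (xs ++ b)) psi).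
Proof.
have [_ [lt_trans lt_total]] := Hlin M HM.
have [z1 [_ Hz1]] := Hinacc n k' phi Hphi M HM a.
have [c [Hc [_ Hcn]]] :=
  exists_bounded_witness HM Hinacc lt_trans lt_total Hphi Hpsi Hb Hz1 (p := [::]) erefl Hunb.
by exists c.
Qed.
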